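(* In the SSBM of the context, let $V^\perp\in\mathbb R^{n\times(n-k)}$ be any matrix whose columns form an orthonormal basis of the orthogonal complement of the column span of $\Theta$. Then $$\mathcal L_{sym}=\begin{bmatrix}\Theta&V^\perp\end{bmatrix}\begin{pmatrix}\bar C&0\\0&\bar\alpha I_{n-k}\end{pmatrix}\begin{bmatrix}\Theta^\top\\(V^\perp)^\top\end{bmatrix},$$ with $\bar C=\bar\alpha I_k-\bar B$, $\bar\alpha=1+\frac p{\bar d}(1-2\eta)$, and $\bar B\in\mathbb R^{k\times k}$ given by $\bar B_{ii}=\frac{n_ip}{\bar d}(1-2\eta)$ and $\bar B_{ii'}=-\frac{\sqrt{n_in_{i'}}\,p}{\bar d}(1-2\eta)$ for $i\ne i'$.
   Context: SSBM: integers $n\ge2,k\ge2$, $p\in(0,1]$, $\eta\in[0,1/2)$, partition of $[n]$ into nonempty clusters $C_1,\dots,C_k$, $|C_i|=n_i$; edges present independently w.p. $p$, signed $+1$ within and $-1$ across clusters, signs flipped independently w.p. $\eta$. $A$ symmetric signed adjacency (zero diagonal), $\bar D=\mathrm{diag}(|A|\mathbf1)$ the signed degree matrix, $\bar d=p(n-1)$ so that $\mathbb E\bar D=\bar dI_n$. $\Theta_{ji}=1/\sqrt{n_i}$ if $j\in C_i$ else 0. $\mathcal L_{sym}=I-(\mathbb E\bar D)^{-1/2}\mathbb E[A](\mathbb E\bar D)^{-1/2}$. *)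

From HB Require Import structures.
From mathcomp Require Import all_boot all_order all_algebra.
Set Implicit Arguments. Unset Strict Implicit. Unset Printing Implicit Defensive.
Import Order.TTheory GRing.Theory Num.Theory.
Local Open Scope ring_scope.

Section SSBM.
Variables (R : rcfType) (n k : nat).

Definition csize (c : 'I_n -> 'I_k) (i : 'I_k) : nat := #|[set j | c j == i]|.

(* Law of an off-diagonal entry A_{jl} (j <> l) of the signed adjacency matrix:
   with s = +1 if j,l in the same cluster and s = -1 otherwise,
   A_{jl} = s w.p. p(1-eta), -s w.p. p*eta, 0 w.p. 1-p; A_{jj} = 0. *)
Definition ssbm_sign (c : 'I_n -> 'I_k) (j l : 'I_n) : R :=
  if c j == c l then 1 else -1.

(* E[A] : expectation computed entrywise from the law above *)
Definition expA (c : 'I_n -> 'I_k) (p eta : R) : 'M[R]_n :=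
  \matrix_(j, l) if j == l then 0 else
     ssbm_sign c j l * (p * (1 - eta)) + (- ssbm_sign c j l) * (p * eta)
     + 0 * (1 - p).

(* E[Dbar] : Dbar = diag(|A| 1), expectation computed entrywise,
   E|A_{jl}| = 1 * p + 0 * (1 - p) for j <> l. *)
Definition expD (p : R) : 'M[R]_n :=
  \matrix_(j, l) if j == l then
     \sum_(m < n | m != j) (1 * p + 0 * (1 - p)) else 0.

Definition diag_invsqrt (D : 'M[R]_n) : 'M[R]_n :=
  \matrix_(j, l) if j == l then (Num.sqrt (D j j))^-1 else 0.

Definition Lsym (c : 'I_n -> 'I_k) (p eta : R) : 'M[R]_n :=
  1%:M - diag_invsqrt (expD p) *m expA c p eta *m diag_invsqrt (expD p).

Definition Theta (c : 'I_n -> 'I_k) : 'M[R]_(n, k) :=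
  \matrix_(j, i) if c j == i then (Num.sqrt (csize c i)%:R)^-1 else 0.

Definition dbar (p : R) : R := p * (n.-1)%:R.

Definition alphabar (p eta : R) : R := 1 + p / dbar p * (1 - 2 * eta).

Definition Bbar (c : 'I_n -> 'I_k) (p eta : R) : 'M[R]_k :=
  \matrix_(i, i') if i == i' then (csize c i)%:R * p / dbar p * (1 - 2 * eta)
     else - (Num.sqrt ((csize c i)%:R * (csize c i')%:R) * p / dbar p * (1 - 2 * eta)).

Definition Cbar (c : 'I_n -> 'I_k) (p eta : R) : 'M[R]_k :=
  (alphabar p eta)%:M - Bbar c p eta.

Definition is_orth_compl_basis (T : 'M[R]_(n, k)) (V : 'M[R]_(n, n - k)) : Prop :=
  [/\ V^T *m V = 1%:M,
      T^T *m V = 0 &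
      forall x : 'cV[R]_n, T^T *m x = 0 -> exists y : 'cV[R]_(n - k), x = V *m y].

End SSBM.

(* Since every vertex has the same expected degree, E[D] is the scalar matrix
   dbar I, so L_sym = alphabar I - q S, where q = p (1 - 2 eta) / dbar and
   S = (s_{jl}) is the +1/-1 cluster sign matrix.  The sign matrix factors
   through the normalised cluster indicator: Theta Bbar Theta^T = q S.  Finally
   Theta Theta^T + V V^T = I because the columns of Theta are orthonormal and
   V completes them to an orthonormal basis, hence
   Theta Cbar Theta^T + alphabar V V^T = alphabar I - q S = L_sym. *)

From HB Require Import structures.
From mathcomp Require Import all_boot all_order all_algebra.
From mathcomp Require Import ring.
Set Implicit Arguments. Unset Strict Implicit. Unset Printing Implicit Defensive.
Import Order.TTheory GRing.Theory Num.Theory.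
Local Open Scope ring_scope.

Section OrthComplBasis.
Variables (R : rcfType) (n k : nat) (T : 'M[R]_(n, k)) (V : 'M[R]_(n, n - k)).

Lemma orth_compl_basis_resolution :
  T^T *m T = 1%:M -> is_orth_compl_basis T V -> T *m T^T + V *m V^T = 1%:M.
Proof.
move=> TT [VV TV HV].
have VT : V^T *m T = 0 by rewrite -[V^T *m T]trmxK trmx_mul trmxK TV trmx0.
suff resolve : forall x : 'cV[R]_n, (T *m T^T + V *m V^T) *m x = x.
  apply/matrixP => i j.
  have := congr1 (fun x : 'cV[R]_n => x i 0) (resolve (delta_mx j 0)).
  by rewrite -!colE !mxE eqxx andbT.
move=> x.
set r := x - T *m (T^T *m x).
have [y ry] : exists y, r = V *m y.
  by apply: HV; rewrite mulmxBr [T^T *m (T *m _)]mulmxA TT mul1mx subrr.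
have Vr : V^T *m r = y by rewrite ry mulmxA VV mul1mx.
have {}Vr : V^T *m x = y by rewrite -Vr mulmxBr [V^T *m (T *m _)]mulmxA VT mul0mx subr0.
by rewrite mulmxDl -!mulmxA Vr -ry /r addrC subrK.
Qed.

End OrthComplBasis.

Section Cluster.
Variables (R : rcfType) (n k : nat) (c : 'I_n -> 'I_k).
Hypothesis c_surj : forall i : 'I_k, exists j : 'I_n, c j = i.

Definition sign_mx : 'M[R]_n := \matrix_(j, l) ssbm_sign R c j l.

Local Notation t i := (Num.sqrt (csize c i)%:R : R)^-1.

Lemma csize_gt0 i : (0 < csize c i)%N.
Proof.
have [j <-] := c_surj i.
by rewrite /csize card_gt0; apply/set0Pn; exists j; rewrite inE.
Qed.

Lemma sqrt_csize_gt0 i : 0 < Num.sqrt (csize c i)%:R :> R.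
Proof. by rewrite sqrtr_gt0 ltr0n csize_gt0. Qed.

Lemma sqr_sqrt_csize i : Num.sqrt (csize c i)%:R ^+ 2 = (csize c i)%:R :> R.
Proof. by rewrite sqr_sqrtr ?ler0n. Qed.

Lemma sum_Theta_row j (f : 'I_k -> R) :
  \sum_i Theta R c j i * f i = t (c j) * f (c j).
Proof.
rewrite (bigD1 (c j)) //= big1 ?addr0; first by rewrite mxE eqxx.
by move=> i ne; rewrite mxE eq_sym (negbTE ne) mul0r.
Qed.

Lemma Theta_orthonormal : (Theta R c)^T *m Theta R c = 1%:M.
Proof.
apply/matrixP => i i'; rewrite !mxE (bigID (fun j => c j == i)) /=.
rewrite [X in _ + X]big1 ?addr0 => [|j /negbTE cj]; last by rewrite !mxE cj mul0r.
under eq_bigr => j /eqP cj do rewrite !mxE cj eqxx.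
case: (eqVneq i i') => [<-|_]; last by rewrite big1 // => j _; rewrite mulr0.
rewrite sumr_const -invfM -expr2 sqr_sqrt_csize.
have -> : #|[pred j | c j == i]| = csize c i by rewrite /csize cardsE.
by rewrite -[_ *+ csize c i]mulr_natr mulVf // pnatr_eq0 -lt0n csize_gt0.
Qed.

Lemma Theta_conj_mxE (M : 'M[R]_k) j l :
  (Theta R c *m M *m (Theta R c)^T) j l = t (c j) * M (c j) (c l) * t (c l).
Proof.
rewrite mxE (bigD1 (c l)) //= big1 ?addr0.
  by rewrite !mxE eqxx sum_Theta_row.
by move=> i ne; rewrite !mxE eq_sym (negbTE ne) mulr0.
Qed.

Lemma Theta_conj_Bbar p eta :
  Theta R c *m Bbar c p eta *m (Theta R c)^T =
    (p / dbar n p * (1 - 2 * eta)) *: sign_mx.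
Proof.
apply/matrixP => j l; rewrite Theta_conj_mxE !mxE /ssbm_sign.
move: (dbar n p)^-1 => dinv.
have sj := sqrt_csize_gt0 (c j); have sl := sqrt_csize_gt0 (c l).
case: eqP => [<-|_].
  have := sqr_sqrt_csize (c j); set s := Num.sqrt _ => <-.
  by field; exact: lt0r_neq0.
by rewrite sqrtrM ?ler0n //; field; rewrite !lt0r_neq0.
Qed.

Lemma expA_sign_mx p eta :
  expA c p eta = (p * (1 - 2 * eta)) *: (sign_mx - 1%:M).
Proof.
apply/matrixP => j l; rewrite !mxE.
case: (eqVneq j l) => [->|_]; first by rewrite /ssbm_sign !eqxx mulr1n subrr mulr0.
by rewrite mulr0n subr0; ring.
Qed.

End Cluster.

Lemma expD_scalar (R : rcfType) (n : nat) (p : R) : expD n p = (dbar n p)%:M.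
Proof.
apply/matrixP => j l; rewrite !mxE; case: (eqVneq j l) => [->|_] //.
by rewrite mulr1n mul1r mul0r addr0 sumr_const cardC1 card_ord /dbar mulr_natr.
Qed.

Lemma diag_invsqrt_scalar (R : rcfType) (n : nat) (a : R) :
  diag_invsqrt (a%:M : 'M[R]_n) = ((Num.sqrt a)^-1)%:M.
Proof.
apply/matrixP => j l; rewrite !mxE.
by case: (eqVneq j l) => [->|_]; rewrite ?eqxx ?mulr1n ?mulr0n.
Qed.

Lemma Lsym_sign_mx (R : rcfType) (n k : nat) (c : 'I_n -> 'I_k) (p eta : R) :
  0 <= p ->
  Lsym c p eta =
    (alphabar n p eta)%:M - (p / dbar n p * (1 - 2 * eta)) *: sign_mx R c.
Proof.
move=> p_ge0.
have d_ge0 : 0 <= dbar n p by rewrite mulr_ge0 ?ler0n.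
rewrite /Lsym expD_scalar diag_invsqrt_scalar expA_sign_mx.
have scale : let s := Num.sqrt (dbar n p) in
    s^-1 * (s^-1 * (p * (1 - 2 * eta))) = p / dbar n p * (1 - 2 * eta).
  by rewrite /= mulrA -invfM -expr2 sqr_sqrtr //; ring.
rewrite mul_scalar_mx mul_mx_scalar !scalerA scale.
by rewrite scalerBr scalemx1 opprB addrA -raddfD.
Qed.

Theorem mainTheorem16 (R : rcfType) (n k : nat) (c : 'I_n -> 'I_k) (p eta : R)
  (V : 'M[R]_(n, n - k)) :
  (2 <= n)%N -> (2 <= k)%N -> 0 < p -> p <= 1 -> 0 <= eta -> eta < 2^-1 ->
  (forall i : 'I_k, exists j : 'I_n, c j = i) ->
  is_orth_compl_basis (Theta R c) V ->
  Lsym c p eta =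
    row_mx (Theta R c) V
    *m block_mx (Cbar c p eta) 0 0 ((alphabar n p eta)%:M : 'M[R]_(n - k))
    *m col_mx (Theta R c)^T V^T.
Proof.
(* The identity is algebraic: only p >= 0 and nonempty clusters are needed. *)
move=> _ _ p_gt0 _ _ _ c_surj HV.
have resolution := orth_compl_basis_resolution (Theta_orthonormal R c_surj) HV.
rewrite mul_row_block !mulmx0 addr0 add0r mul_row_col /Cbar.
rewrite mulmxBr mulmxBl Theta_conj_Bbar // !mul_mx_scalar -!scalemxAl.
by rewrite addrAC -scalerDr resolution scalemx1 Lsym_sign_mx // ltW.
Qed.
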